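(* Let $K\ge 2$ and $L\ge 2$ be integers and let $s_1,\dots,s_K\in[0,1]$ be offers that are not all zero. Consider the symmetric $L$-player responder game in which each responder's strategy is a probability vector $p=(p_1,\dots,p_K)$ (with $p_i\ge 0$, $\sum_i p_i=1$), $p_i$ being the probability of choosing proposer $i$; a responder who chooses proposer $i$ receives $s_i$ with probability $1/N_i$ and $0$ otherwise, where $N_i$ is the total number of responders who chose proposer $i$ (all choices being made independently). Then this game possesses a unique evolutionarily stable strategy.
   Context: This is the responder stage of the Multi-Proposer-Multi-Responder Ultimatum Game with $K$ proposers and $L$ responders: each proposer $i$ offers a share $s_i$ of a reward of size one; each responder independently selects one proposer according to its mixed strategy; a proposer selected by at least one responder receives $1-s_i$, otherwise $0$; among the responders who selected proposer $i$, exactly one chosen uniformly at random receives $s_i$, the rest receive $0$. Responders are drawn from an infinite population. For a symmetric $L$-player game, write $E(q;\,r)$ for the expected payoff of a focal player using strategy $q$ when each of the other $L-1$ players independently uses strategy $r$ (equivalently, is drawn from a population whose average strategy is $r$). A strategy $p$ is evolutionarily stable if for every strategy $q\neq p$ there is $\bar\varepsilon>0$ such that for all $\varepsilon\in(0,\bar\varepsilon)$, $E(p;\,(1-\varepsilon)p+\varepsilon q)>E(q;\,(1-\varepsilon)p+\varepsilon q)$. *)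

From mathcomp Require Import all_boot all_order all_algebra.
From mathcomp Require Import reals.
Set Implicit Arguments. Unset Strict Implicit. Unset Printing Implicit Defensive.
Import Order.TTheory GRing.Theory Num.Theory.
Local Open Scope ring_scope.

Definition is_strategy (R : realType) (K : nat) (p : {ffun 'I_K -> R}) : Prop :=
  (forall i, 0 <= p i) /\ \sum_(i < K) p i = 1.

(* Expected payoff E(q; r) of a focal responder using q when each of the other
   L-1 responders independently uses r.  f : 'I_(L-1) -> 'I_K is the profile of
   choices of the others (probability \prod_j r (f j)); if the focal player
   chooses c, it receives s c with probability 1/N_c, N_c = 1 + #{j | f j = c}. *)
Definition payoff (R : realType) (K L : nat) (s : 'I_K -> R)
    (q r : {ffun 'I_K -> R}) : R :=
  \sum_(c < K) \sum_(f : {ffun 'I_(L.-1) -> 'I_K})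
     q c * (\prod_(j < L.-1) r (f j)) * (s c / (#|[set j | f j == c]|.+1)%:R).

Definition mixture (R : realType) (K : nat) (e : R) (p q : {ffun 'I_K -> R})
  : {ffun 'I_K -> R} := [ffun i => (1 - e) * p i + e * q i].

Definition is_ESS (R : realType) (K L : nat) (s : 'I_K -> R)
    (p : {ffun 'I_K -> R}) : Prop :=
  is_strategy p /\
  forall q : {ffun 'I_K -> R}, is_strategy q -> q <> p ->
    exists2 eb : R, 0 < eb & forall e : R, 0 < e -> e < eb ->
      payoff L s q (mixture e p q) < payoff L s p (mixture e p q).

From mathcomp Require Import all_boot all_order all_algebra.
From mathcomp Require Import reals.
From mathcomp Require Import ring lra.
From mathcomp Require Import boolp classical_sets topology normedtype derive.
Set Implicit Arguments. Unset Strict Implicit. Unset Printing Implicit Defensive.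
Import Order.TTheory GRing.Theory Num.Theory.
Import numFieldNormedType.Exports.
Local Open Scope ring_scope.

(* A responder who picks proposer c, while each of the L - 1 others picks c
   with probability x, expects s_c * g(x), where g(x) = E[1/(1 + B)] for
   B ~ Bin(L - 1, x); equivalently g(x) = (1/L) * sum_(j < L) (1 - x)^j, which
   is strictly decreasing on [0, 1].  Payoffs are therefore linear in the focal
   strategy: E(q; r) = sum_c q_c s_c g(r_c).
   By the intermediate value theorem there is a level v > 0 such that the
   shares p_c solving s_c g(p_c) = v (clamped to [0, 1]) sum to one.  For
   q <> p and m = (1 - e) p + e q with 0 < e <= 1,
     E(p; m) - E(q; m) = sum_c (p_c - q_c) (s_c g(m_c) - v) > 0,
   because m_c lies strictly between p_c and q_c and g is decreasing.  So p is
   an ESS whose invasion barrier is 1, and any other ESS p' would be invaded by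
   p: the mixture of p' with weight e of p is the mixture of p with weight
   1 - e of p'. *)

Section BinomialCount.
Variables (R : comNzRingType) (K n : nat) (r : 'I_K -> R) (c : 'I_K).

Definition hits (f : {ffun 'I_n -> 'I_K}) : nat := #|[set j | f j == c]|.

Lemma hits_lt (f : {ffun 'I_n -> 'I_K}) : (hits f < n.+1)%N.
Proof. by rewrite ltnS /hits -[leqRHS](card_ord n) max_card. Qed.

Lemma coef_binomial_pow (x y : R) (k : nat) : (k < n.+1)%N ->
  ((y%:P + x%:P * 'X) ^+ n)`_k = 'C(n, k)%:R * x ^+ k * y ^+ (n - k).
Proof.
move=> lt_kn; rewrite exprDn.
under eq_bigr => i _ do
  rewrite exprMn -!rmorphXn /= mulrA -rmorphM /= mul_polyC scalerMnl.
rewrite coef_sumMXn (big_pred1 (Ordinal lt_kn)) /=; last by move=> i; rewrite /= -val_eqE.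
by rewrite -mulr_natl (mulrC (y ^+ _)) mulrA.
Qed.

Hypothesis sum_r : \sum_(i < K) r i = 1.

Lemma sum_prod_hits_poly :
  \sum_(f : {ffun 'I_n -> 'I_K}) (\prod_(j < n) r (f j)) *: 'X^(hits f)
    = ((1 - r c)%:P + (r c)%:P * 'X) ^+ n.
Proof.
have choice_poly : \sum_(d < K) (r d)%:P * 'X^(d == c) = (1 - r c)%:P + (r c)%:P * 'X.
  have sum_others : \sum_(d < K | d != c) r d = 1 - r c.
    by rewrite -sum_r [in RHS](bigD1 c) //= addrC addrK.
  rewrite (bigD1 c) //= eqxx expr1 addrC -sum_others rmorph_sum.
  by congr (_ + _); apply: eq_bigr => d /negbTE ->; rewrite expr0 mulr1.
rewrite -choice_poly -[n in _ ^+ n]card_ord -prodr_const bigA_distr_bigA /=.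
apply: eq_bigr => f _; rewrite big_split /= -rmorph_prod prodrXr mul_polyC.
congr (_ *: 'X^_); rewrite /hits cardsE -sum1_card big_mkcond /=.
by apply: eq_bigr => j _; rewrite -[_ \in _]/(f j == c); case: (f j == c).
Qed.

Lemma sum_prod_hitsE (F : nat -> R) :
  \sum_(f : {ffun 'I_n -> 'I_K}) (\prod_(j < n) r (f j)) * F (hits f) =
  \sum_(k < n.+1) F k * ('C(n, k)%:R * r c ^+ k * (1 - r c) ^+ (n - k)).
Proof.
have hits_mass (k : 'I_n.+1) : \sum_(f | hits f == k) \prod_(j < n) r (f j) =
    'C(n, k)%:R * r c ^+ k * (1 - r c) ^+ (n - k).
  by rewrite -coef_binomial_pow // -sum_prod_hits_poly coef_sumMXn.
rewrite (eq_bigr (fun f => \sum_(k < n.+1 | hits f == k) (\prod_(j < n) r (f j)) * F k));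
  last by move=> f _; rewrite (big_pred1 (Ordinal (hits_lt f))).
rewrite (exchange_big_dep xpredT) //=; apply: eq_bigr => k _.
by rewrite -mulr_suml hits_mass mulrC.
Qed.

End BinomialCount.

Section MeanShare.
Variable R : numFieldType.

Definition mean_share (n : nat) (x : R) : R :=
  (n.+1%:R)^-1 * \sum_(j < n.+1) (1 - x) ^+ j.

Lemma mean_share0 n : mean_share n 0 = 1.
Proof.
rewrite /mean_share subr0; under eq_bigr do rewrite expr1n.
by rewrite sumr_const card_ord mulVf ?pnatr_eq0.
Qed.

Lemma binomial_mean_inv_succ n x :
  \sum_(k < n.+1) (k.+1%:R)^-1 * ('C(n, k)%:R * x ^+ k * (1 - x) ^+ (n - k))
    = mean_share n x.
Proof.
have [->|x_neq0] := eqVneq x 0.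
  rewrite mean_share0 big_ord_recl big1 => [|i _].
    by rewrite subr0 !expr0 expr1n bin0 !mulr1 invr1 addr0.
  by rewrite expr0n /= !mulr0 mul0r mulr0.
have n1_neq0 : (n.+1%:R : R) != 0 by rewrite pnatr_eq0.
apply: (mulfI (mulf_neq0 x_neq0 n1_neq0)).
rewrite /mean_share mulrA -[x * _ * _^-1]mulrA divff // mulr1.
have -> : x * \sum_(j < n.+1) (1 - x) ^+ j = 1 - (1 - x) ^+ n.+1.
  by rewrite -[RHS]opprB subrX1 addrAC subrr add0r mulNr opprK.
rewrite mulr_sumr.
have binom_step (k : 'I_n.+1) :
    x * n.+1%:R * ((k.+1%:R)^-1 * ('C(n, k)%:R * x ^+ k * (1 - x) ^+ (n - k)))
    = 'C(n.+1, k.+1)%:R * x ^+ k.+1 * (1 - x) ^+ (n - k).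
  have k1_neq0 : (k.+1%:R : R) != 0 by rewrite pnatr_eq0.
  have -> : 'C(n.+1, k.+1)%:R = n.+1%:R * 'C(n, k)%:R / k.+1%:R :> R.
    by rewrite -natrM mul_bin_diag natrM mulrAC divff // mul1r.
  by rewrite exprS; field; rewrite addrC natr1.
under eq_bigr do rewrite binom_step.
have := exprDn (1 - x) x n.+1.
rewrite subrK expr1n big_ord_recl subn0 expr0 mulr1 bin0 mulr1n => expand.
rewrite [X in _ = X - _]expand addrAC subrr add0r; apply: eq_bigr => k _.
by rewrite lift0 subSS -mulr_natl; ring.
Qed.

End MeanShare.

Section MeanShareOrder.
Variable R : realFieldType.

Lemma mean_share_gt0 n (x : R) : x <= 1 -> 0 < mean_share n x.
Proof.
move=> x_le1; rewrite mulr_gt0 ?invr_gt0 ?ltr0Sn // big_ord_recl expr0.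
rewrite (lt_le_trans ltr01) // lerDl sumr_ge0 // => i _.
by rewrite exprn_ge0 ?subr_ge0.
Qed.

Lemma mean_share_lt n (a b : R) : (0 < n)%N -> a < b -> b <= 1 ->
  mean_share n b < mean_share n a.
Proof.
case: n => // n _ lt_ab b_le1; rewrite ltr_pM2l ?invr_gt0 ?ltr0Sn //.
rewrite !big_ord_recl ltrD2l /= !expr1.
rewrite ltr_leD ?ltrD2l ?ltrN2 // ler_sum // => j _.
have le_ab := ltW lt_ab.
by rewrite lerXn2r ?nnegrE ?subr_ge0 ?lerD2l ?lerN2 // (le_trans le_ab).
Qed.

Lemma continuous_mean_share n : continuous (@mean_share R n).
Proof.
have -> : @mean_share R n = horner ((n.+1%:R)^-1%:P * \sum_(j < n.+1) (1 - 'X) ^+ j).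
  apply: funext => x; rewrite hornerM hornerC horner_sum /mean_share.
  congr (_ * _); apply: eq_bigr => j _.
  by rewrite horner_exp hornerD hornerN hornerX hornerC.
exact: continuous_horner.
Qed.

End MeanShareOrder.

Section Level.
Variable R : realType.
Implicit Types (f psi : R -> R) (e v w x : R).

(* x solves f x = w in [0, 1], clamped to an endpoint when w is out of range. *)
Definition at_level f w x : Prop :=
  [/\ 0 <= x <= 1, x < 1 -> f x <= w & 0 < x -> w <= f x].

Lemma at_level_exists f w :
  {within `[0, 1], continuous f}%classic -> exists x, at_level f w x.
Proof.
move=> f_cont.
have [le_w_f1|lt_f1_w] := lerP w (f 1).
  by exists 1; split; rewrite ?ler01 ?lexx ?ltxx.
have [le_f0_w|lt_w_f0] := lerP (f 0) w.
  by exists 0; split; rewrite ?ler01 ?lexx ?ltxx.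
have w_between : Num.min (f 0) (f 1) <= w <= Num.max (f 0) (f 1).
  by rewrite ge_min le_max (ltW lt_f1_w) (ltW lt_w_f0) orbT.
have [x] := IVT ler01 f_cont w_between.
by rewrite in_itv /= => x01 <-; exists x; split.
Qed.

Variable f : R -> R.
Hypothesis f_decr : {in `[0, 1] &, {homo f : x y /~ x < y}}.

Let in01 x : 0 <= x -> x <= 1 -> x \in `[0, 1].
Proof. by move=> x_ge0 x_le1; rewrite in_itv /= x_ge0. Qed.

Lemma at_level_top x : at_level f (f 1) x -> x = 1.
Proof.
case=> /andP[x_ge0 x_le1] f_le _; apply/le_anti; rewrite x_le1 /= leNgt.
apply/negP => x_lt1; have := f_le x_lt1.
by rewrite leNgt f_decr ?in01 ?ler01.
Qed.

Lemma at_level_bot w x : f 0 <= w -> at_level f w x -> x = 0.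
Proof.
move=> f0_le [/andP[x_ge0 x_le1] _ f_ge]; apply/le_anti; rewrite x_ge0 andbT leNgt.
apply/negP => x_gt0; have := le_trans f0_le (f_ge x_gt0).
by rewrite leNgt f_decr ?in01 ?ler01.
Qed.

Variable psi : R -> R.
Hypothesis psi_level : forall w, at_level f w (psi w).

Let f_nincr := ltW_nhomo_in f_decr.

Lemma at_level_near_ub v e : 0 < e -> \forall w \near v, psi w < psi v + e.
Proof.
move=> e_gt0; have [/andP[x_ge0 x_le1] fx_le fx_ge] := psi_level v.
set x := psi v in x_ge0 x_le1 fx_le fx_ge *.
have [y_lt1|y_ge1] := ltP (x + e / 2) 1; last first.
  by near=> w; have [/andP[_ psiw_le1] _ _] := psi_level w; lra.
have fy_lt_v : f (x + e / 2) < v.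
  by apply: lt_le_trans (fx_le _); rewrite ?f_decr ?in01; lra.
near=> w.
have fy_lt_w : f (x + e / 2) < w by near: w; apply: open_gt.
have [/andP[_ psiw_le1] _ fpsi_ge] := psi_level w.
have [psiw_lt|y_le_psiw] := ltP (psi w) (x + e / 2); first lra.
have : f (psi w) <= f (x + e / 2) by rewrite f_nincr ?in01; lra.
have : w <= f (psi w) by apply: fpsi_ge; lra.
lra.
Unshelve. all: by end_near.
Qed.

Lemma at_level_near_lb v e : 0 < e -> \forall w \near v, psi v - e < psi w.
Proof.
move=> e_gt0; have [/andP[x_ge0 x_le1] fx_le fx_ge] := psi_level v.
set x := psi v in x_ge0 x_le1 fx_le fx_ge *.
have [y_gt0|y_le0] := ltP 0 (x - e / 2); last first.
  by near=> w; have [/andP[psiw_ge0 _] _ _] := psi_level w; lra.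
have v_lt_fy : v < f (x - e / 2).
  by apply: le_lt_trans (fx_ge _) _; rewrite ?f_decr ?in01; lra.
near=> w.
have w_lt_fy : w < f (x - e / 2) by near: w; apply: open_lt.
have [/andP[psiw_ge0 _] fpsi_le _] := psi_level w.
have [lt_psiw|psiw_le_y] := ltP (x - e / 2) (psi w); first lra.
have : f (x - e / 2) <= f (psi w) by rewrite f_nincr ?in01; lra.
have : f (psi w) <= w by apply: fpsi_le; lra.
lra.
Unshelve. all: by end_near.
Qed.

Lemma continuous_at_level : continuous psi.
Proof.
move=> v; apply/cvgrPdist_lt => e e_gt0; near=> w.
rewrite ltr_distlC; apply/andP; split; near: w;
  [exact: at_level_near_lb | exact: at_level_near_ub].
Unshelve. all: by end_near.
Qed.

End Level.

Definition choice_payoff (R : realType) K L (s : 'I_K -> R) (c : 'I_K) (x : R) : R :=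
  s c * mean_share L.-1 x.

Section ChoicePayoff.
Variables (R : realType) (K L : nat) (s : 'I_K -> R) (c : 'I_K).

Lemma choice_payoff0 : choice_payoff L s c 0 = s c.
Proof. by rewrite /choice_payoff mean_share0 mulr1. Qed.

Lemma continuous_choice_payoff : continuous (choice_payoff L s c).
Proof.
by move=> x; apply: continuousM; [exact: cst_continuous | exact: continuous_mean_share].
Qed.

Hypothesis L_gt1 : (1 < L)%N.

Let others_gt0 : (0 < L.-1)%N.
Proof. by rewrite -subn1 subn_gt0. Qed.

Lemma choice_payoff_lt :
  0 < s c -> {in `[0, 1] &, {homo choice_payoff L s c : x y /~ x < y}}.
Proof.
move=> s_gt0 x y /[!in_itv] /andP[_ x_le1] _ lt_yx.
by rewrite ltr_pM2l // mean_share_lt.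
Qed.

Lemma choice_payoff_le x y : 0 <= s c -> x <= y -> y <= 1 ->
  choice_payoff L s c y <= choice_payoff L s c x.
Proof.
move=> s_ge0; rewrite le_eqVlt => /predU1P[-> //|lt_xy y_le1].
by rewrite ler_wpM2l // ltW // mean_share_lt.
Qed.

End ChoicePayoff.

Lemma payoffE (R : realType) K L (s : 'I_K -> R) (q r : {ffun 'I_K -> R}) :
  \sum_(i < K) r i = 1 ->
  payoff L s q r = \sum_(c < K) q c * choice_payoff L s c (r c).
Proof.
move=> sum_r; apply: eq_bigr => c _.
rewrite /choice_payoff -binomial_mean_inv_succ.
rewrite -(sum_prod_hitsE L.-1 c sum_r (fun k => k.+1%:R^-1)) !mulr_sumr.
by apply: eq_bigr => f _; rewrite /hits; ring.
Qed.

Section Strategies.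
Variables (R : realType) (K : nat).
Implicit Types (p q : {ffun 'I_K -> R}) (e : R).

Lemma strategy_le1 p c : is_strategy p -> p c <= 1.
Proof. by case=> p_ge0 <-; rewrite (bigD1 c) //= lerDl sumr_ge0. Qed.

Lemma sum_mixture e p q : \sum_(i < K) p i = 1 -> \sum_(i < K) q i = 1 ->
  \sum_(i < K) mixture e p q i = 1.
Proof.
move=> sum_p sum_q; under eq_bigr do rewrite ffunE.
by rewrite big_split /= -!mulr_sumr sum_p sum_q !mulr1 subrK.
Qed.

Lemma mixtureC e p q : mixture (1 - e) p q = mixture e q p.
Proof. by apply/ffunP => i; rewrite !ffunE; ring. Qed.

Lemma exists_lt_of_sum_eq p q : \sum_(i < K) q i = \sum_(i < K) p i -> q <> p ->
  exists c, q c < p c.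
Proof.
move=> sum_eq q_neq_p; apply: contrapT => no_lt; apply: q_neq_p; apply/ffunP => i.
have gap_ge0 j : 0 <= q j - p j.
  by rewrite subr_ge0 leNgt; apply/negP => lt_qp; apply: no_lt; exists j.
have /eqP : q i - p i = 0.
  apply: (@psumr_eq0P _ _ xpredT (fun j => q j - p j)) => //.
  by rewrite sumrB sum_eq subrr.
by rewrite subr_eq0 => /eqP.
Qed.

Section MixtureBounds.
Variables (p q : {ffun 'I_K -> R}) (e : R).
Hypotheses (p_strat : is_strategy p) (q_strat : is_strategy q).
Hypotheses (e_gt0 : 0 < e) (e_le1 : e <= 1).

Let m := mixture e p q.

Let mE c : m c = p c + e * (q c - p c).
Proof. by rewrite /m ffunE; ring. Qed.

Lemma mixture_lt c : q c < p c -> 0 <= m c < p c.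
Proof.
move=> lt_qp; rewrite {2}mE gtrDl pmulr_rlt0 // subr_lt0 lt_qp andbT /m ffunE.
have [p_ge0 q_ge0] := (p_strat.1 c, q_strat.1 c).
by apply: addr_ge0; apply: mulr_ge0; rewrite ?subr_ge0 ?(ltW e_gt0).
Qed.

Lemma mixture_gt c : p c < q c -> p c < m c <= 1.
Proof.
move=> lt_pq; rewrite mE ltrDl pmulr_rgt0 // subr_gt0 lt_pq /= -mE /m ffunE.
apply: (@le_trans _ _ ((1 - e) * 1 + e * 1)); last by rewrite !mulr1 subrK.
by apply: lerD; apply: ler_wpM2l; rewrite ?subr_ge0 ?(ltW e_gt0) ?strategy_le1.
Qed.

End MixtureBounds.

End Strategies.

Section Balanced.
Variables (R : realType) (K L : nat) (s : 'I_K -> R).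
Hypotheses (L_gt1 : (1 < L)%N) (s_ge0 : forall i, 0 <= s i).

Definition balanced (p : {ffun 'I_K -> R}) (v : R) : Prop :=
  forall c, at_level (choice_payoff L s c) v (p c).

Variables (p q : {ffun 'I_K -> R}) (v e : R).
Hypotheses (p_strat : is_strategy p) (q_strat : is_strategy q).
Hypotheses (p_bal : balanced p v) (v_gt0 : 0 < v) (e_gt0 : 0 < e) (e_le1 : e <= 1).

Let m := mixture e p q.

Lemma balanced_gap_lt0 c : q c < p c ->
  (q c - p c) * (choice_payoff L s c (m c) - v) < 0.
Proof.
move=> lt_qp; have /andP[m_ge0 lt_mp] := mixture_lt p_strat q_strat e_gt0 e_le1 lt_qp.
have [/andP[p_ge0 p_le1] _ v_le] := p_bal c.
have m_le1 : m c <= 1 := ltW (lt_le_trans lt_mp p_le1).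
have p_gt0 : 0 < p c by rewrite (le_lt_trans m_ge0).
have s_gt0 : 0 < s c.
  rewrite lt_neqAle s_ge0 andbT; apply: contraTneq (v_le p_gt0) => s_eq0.
  by rewrite /choice_payoff -s_eq0 mul0r -ltNge.
have : choice_payoff L s c (p c) < choice_payoff L s c (m c).
  by apply: choice_payoff_lt; rewrite ?in_itv /= ?p_ge0 ?p_le1 ?m_ge0 ?m_le1.
have := v_le p_gt0; rewrite nmulr_rlt0 ?subr_lt0 // subr_gt0; exact: le_lt_trans.
Qed.

Lemma balanced_gap_le0 c : (q c - p c) * (choice_payoff L s c (m c) - v) <= 0.
Proof.
have [lt_qp|lt_pq|->] := ltgtP (q c) (p c).
- exact/ltW/balanced_gap_lt0.
- have /andP[lt_pm m_le1] := mixture_gt p_strat q_strat e_gt0 e_le1 lt_pq.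
  have [_ le_v _] := p_bal c.
  have p_lt1 : p c < 1 := lt_le_trans lt_pq (strategy_le1 c q_strat).
  rewrite mulr_ge0_le0 ?subr_ge0 ?(ltW lt_pq) // subr_le0.
  by apply: le_trans (le_v p_lt1); rewrite choice_payoff_le // ltW.
- by rewrite subrr mul0r.
Qed.

Lemma balanced_payoff_lt : q <> p -> payoff L s q m < payoff L s p m.
Proof.
move=> q_neq_p; rewrite !payoffE ?sum_mixture ?p_strat.2 ?q_strat.2 //.
set G := fun c => choice_payoff L s c (m c).
have gap_sum : \sum_(c < K) (q c - p c) * (G c - v)
    = \sum_(c < K) q c * G c - \sum_(c < K) p c * G c.
  under eq_bigr do rewrite mulrBr.
  rewrite sumrB -mulr_suml sumrB q_strat.2 p_strat.2 subrr mul0r subr0 -sumrB.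
  by apply: eq_bigr => c _; rewrite mulrBl.
rewrite -subr_lt0 -gap_sum.
have [c lt_qp] := exists_lt_of_sum_eq (etrans q_strat.2 (esym p_strat.2)) q_neq_p.
rewrite (bigD1 c) //=; have := balanced_gap_lt0 lt_qp.
have : \sum_(i < K | i != c) (q i - p i) * (G i - v) <= 0.
  by apply: sumr_le0 => i _; exact: balanced_gap_le0.
rewrite /G; lra.
Qed.

End Balanced.

Section UniformStability.
Variables (R : realType) (K L : nat) (s : 'I_K -> R).
Implicit Types (p q : {ffun 'I_K -> R}).

Definition uniformly_stable p : Prop :=
  is_strategy p /\ forall q, is_strategy q -> q <> p -> forall e, 0 < e -> e <= 1 ->
    payoff L s q (mixture e p q) < payoff L s p (mixture e p q).

Lemma uniformly_stable_ESS p : uniformly_stable p -> is_ESS L s p.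
Proof.
case=> p_strat p_stable; split=> // q q_strat q_neq_p.
by exists 1 => [|e e_gt0 /ltW]; [exact: ltr01 | exact: p_stable].
Qed.

Lemma uniformly_stable_ESS_eq p p' : uniformly_stable p -> is_ESS L s p' -> p = p'.
Proof.
case=> p_strat p_stable [p'_strat p'_ESS]; apply: contrapT => p_neq_p'.
have [eb eb_gt0 p'_resists] := p'_ESS p p_strat p_neq_p'.
have [e [e_gt0 e_lt_eb e_lt1]] : exists e : R, [/\ 0 < e, e < eb & e < 1].
  by case: (leP eb 1) => ?; [exists (eb / 2) | exists (1 / 2)]; split; lra.
have := p'_resists e e_gt0 e_lt_eb.
have [e'_gt0 e'_le1] : 0 < 1 - e /\ 1 - e <= 1 by split; lra.
have := p_stable p' p'_strat (nesym p_neq_p') (1 - e) e'_gt0 e'_le1.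
by rewrite mixtureC => /lt_trans /[apply]; rewrite ltxx.
Qed.

End UniformStability.

Lemma balanced_uniformly_stable (R : realType) K L (s : 'I_K -> R) p v :
  (1 < L)%N -> (forall i, 0 <= s i) -> is_strategy p -> balanced L s p v -> 0 < v ->
  uniformly_stable L s p.
Proof.
move=> L_gt1 s_ge0 p_strat p_bal v_gt0; split=> // q q_strat q_neq_p e e_gt0 e_le1.
exact: balanced_payoff_lt.
Qed.

Section Existence.
Variables (R : realType) (K L : nat) (s : 'I_K -> R).
Hypotheses (L_gt1 : (1 < L)%N) (s_ge0 : forall i, 0 <= s i).

Definition level_share c w : R :=
  if 0 < s c then xget 0 (at_level (choice_payoff L s c) w) else 0.

Lemma level_share_pos c w : 0 < s c -> at_level (choice_payoff L s c) w (level_share c w).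
Proof.
move=> s_gt0; rewrite /level_share s_gt0; apply: xgetPex; apply: at_level_exists.
exact/continuous_subspaceT/continuous_choice_payoff.
Qed.

Lemma level_share_zero c w : ~~ (0 < s c) -> level_share c w = 0.
Proof. by rewrite /level_share => /negbTE->. Qed.

Lemma level_shareP c w : 0 <= w -> at_level (choice_payoff L s c) w (level_share c w).
Proof.
move=> w_ge0; have [s_gt0|s_le0] := boolP (0 < s c); first exact: level_share_pos.
have s_eq0 : s c = 0 by apply/le_anti; rewrite s_ge0 andbT leNgt.
rewrite level_share_zero //; split; rewrite ?lexx ?ler01 ?ltxx //.
by rewrite /choice_payoff s_eq0 mul0r.
Qed.

Lemma level_share_ge0 c w : 0 <= w -> 0 <= level_share c w.
Proof. by move=> w_ge0; have [/andP[]] := level_shareP c w_ge0. Qed.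

Lemma continuous_level_share c : continuous (level_share c).
Proof.
have [s_gt0|s_le0] := boolP (0 < s c).
  apply: (continuous_at_level (choice_payoff_lt L_gt1 s_gt0) (psi := level_share c)).
  by move=> w; apply: level_share_pos.
have -> : level_share c = fun=> 0 by apply/funext => w; rewrite level_share_zero.
exact: cst_continuous.
Qed.

Lemma exists_balanced : (exists i, s i != 0) ->
  exists p v, [/\ is_strategy p, 0 < v & balanced L s p v].
Proof.
move=> [i s_neq0].
pose total w := \sum_(c < K) level_share c w.
have [c0 _ s_le_c0] := @arg_maxP _ R 'I_K i xpredT s isT.
have s_c0_gt0 : 0 < s c0.
  by apply: lt_le_trans (s_le_c0 i isT); rewrite lt0r s_neq0 s_ge0.
have lo_gt0 : 0 < choice_payoff L s c0 1 by rewrite mulr_gt0 ?mean_share_gt0.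
have lo_le_hi : choice_payoff L s c0 1 <= s c0.
  by rewrite -[leRHS](choice_payoff0 L) ltW // choice_payoff_lt ?in_itv /= ?ler01 ?lexx.
have total_lo : 1 <= total (choice_payoff L s c0 1).
  have c0_decr := choice_payoff_lt L_gt1 s_c0_gt0.
  rewrite /total (bigD1 c0) //= (at_level_top c0_decr (level_share_pos _ s_c0_gt0)).
  by rewrite lerDl sumr_ge0 // => c _; rewrite level_share_ge0 ?ltW.
have total_hi : total (s c0) = 0.
  rewrite /total big1 // => c _; have [s_gt0|s_le0] := boolP (0 < s c).
    have le_hi : choice_payoff L s c 0 <= s c0 by rewrite choice_payoff0; apply: s_le_c0.
    exact (at_level_bot (choice_payoff_lt L_gt1 s_gt0) le_hi (level_share_pos _ s_gt0)).
  exact: level_share_zero.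
have total_cont : continuous total.
  apply: continuous_big => [|c _]; first exact: add_continuous.
  exact: continuous_level_share.
have [v /[!in_itv] /andP[lo_le_v _] total_v] :
    exists2 v, v \in `[choice_payoff L s c0 1, s c0] & total v = 1.
  apply: IVT => //; first exact: continuous_subspaceT.
  by rewrite ge_min le_max total_lo total_hi ler01 orbT.
have v_gt0 : 0 < v by rewrite (lt_le_trans lo_gt0).
exists [ffun c => level_share c v], v; split=> //; last first.
  by move=> c; rewrite ffunE; apply: level_shareP; rewrite ltW.
split=> [c|]; first by rewrite ffunE level_share_ge0 ?ltW.
by rewrite -total_v; apply: eq_bigr => c _; rewrite ffunE.
Qed.

End Existence.

Theorem theorem2 (R : realType) (K L : nat) (s : 'I_K -> R) :
  (2 <= K)%N -> (2 <= L)%N ->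
  (forall i, 0 <= s i <= 1) -> (exists i, s i != 0) ->
  exists! p : {ffun 'I_K -> R}, is_ESS L s p.
Proof.
move=> _ L_gt1 s01 s_neq0.
have s_ge0 i : 0 <= s i by case/andP: (s01 i).
have [p [v [p_strat v_gt0 p_bal]]] := exists_balanced L_gt1 s_ge0 s_neq0.
have p_stable := balanced_uniformly_stable L_gt1 s_ge0 p_strat p_bal v_gt0.
exists p; split; first exact: uniformly_stable_ESS.
by move=> p'; apply: uniformly_stable_ESS_eq.
Qed.
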